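(* Let $q=2$ and $2\leq z\leq 4$. Consider the mean-field equation in $u\in[0,1)$, $$u=\frac{1-\exp(\Delta_{\beta,2,z}(u))}{1+\exp(\Delta_{\beta,2,z}(u))},\qquad\Delta_{\beta,2,z}(u):=-\frac{\beta}{2^{z-1}}\Big[(1+u)^{z-1}-(1-u)^{z-1}\Big].$$ There exists a single $\beta_1(2,z)>0$ such that for $0<\beta\leq\beta_1$ the mean-field equation has only the trivial solution $u=0$, and for $\beta>\beta_1$ it has exactly one additional solution $0<u_1<1$. *)

From Stdlib Require Import Reals.
Open Scope R_scope.

Definition Delta2 (beta : R) (z : nat) (u : R) : R :=
  - (beta / 2 ^ (z - 1)) * ((1 + u) ^ (z - 1) - (1 - u) ^ (z - 1)).

Definition mf_eq2 (beta : R) (z : nat) (u : R) : Prop :=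
  u = (1 - exp (Delta2 beta z u)) / (1 + exp (Delta2 beta z u)).

(* Writing [L u := ln ((1 + u) / (1 - u)) = 2 artanh u] ([two_artanh] below), the mean-field equation reads
   [L u = beta * k u] with [k u = u] for [z = 2, 3] and [k u = (3u + u^3) / 4] for [z = 4].
   The ratio [L u / k u] is strictly increasing on (0, 1), tends to [beta_1] (2, resp. 8/3)
   at 0 and to infinity at 1, so [L u / k u = beta] has no solution for [beta <= beta_1] and
   exactly one for [beta > beta_1]. Both the monotonicity and the squeeze
   [beta_1 < L u / k u < beta_1 / (1 - u^n)] follow from the Taylor bounds
   [2u + 2u^3/3 < L u < 2 (3u + u^3) / (3 (1 - u^4))], proved by the mean value theorem. *)
From Stdlib Require Import Reals Ranalysis5 Lra Lia.
From Coquelicot Require Import Coquelicot.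
Open Scope R_scope.

Definition two_artanh (u : R) : R := ln (1 + u) - ln (1 - u).

Lemma two_artanh_0 : two_artanh 0 = 0.
Proof. unfold two_artanh; rewrite Rplus_0_r, Rminus_0_r, ln_1; ring. Qed.

Lemma derivable_pt_lim_two_artanh u :
  -1 < u < 1 -> derivable_pt_lim two_artanh u (2 / (1 - u ^ 2)).
Proof.
  intros Hu; apply is_derive_Reals; unfold two_artanh; auto_derive.
  - repeat split; lra.
  - field; split; [|split]; nra.
Qed.

Lemma continuity_pt_two_artanh u : -1 < u < 1 -> continuity_pt two_artanh u.
Proof.
  intros Hu; apply derivable_continuous_pt; eexists.
  now apply derivable_pt_lim_two_artanh.
Qed.

Lemma two_artanh_tanh b :
  0 < b -> 0 < (exp b - 1) / (exp b + 1) < 1 /\ two_artanh ((exp b - 1) / (exp b + 1)) = b.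
Proof.
  intros Hb.
  assert (He : 1 < exp b) by (rewrite <- exp_0; apply exp_increasing; lra).
  set (t := (exp b - 1) / (exp b + 1)).
  assert (Hplus : 1 + t = 2 * exp b / (exp b + 1)) by (unfold t; field; lra).
  assert (Hminus : 1 - t = 2 / (exp b + 1)) by (unfold t; field; lra).
  assert (0 < 2 / (exp b + 1)) by (apply Rdiv_lt_0_compat; lra).
  assert (0 < t) by (apply Rdiv_lt_0_compat; lra).
  split; [lra|].
  unfold two_artanh; rewrite <- ln_div by lra.
  replace ((1 + t) / (1 - t)) with (exp b) by (rewrite Hplus, Hminus; field; lra).
  apply ln_exp.
Qed.

Lemma mf_eq2_iff beta z u :
  -1 < u < 1 -> mf_eq2 beta z u <-> two_artanh u = - Delta2 beta z u.
Proof.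
  intros Hu; unfold mf_eq2, two_artanh; set (D := Delta2 beta z u).
  rewrite <- ln_div by lra.
  assert (Hinv : (1 + u) / (1 - u) = / ((1 - u) / (1 + u))) by (field; lra).
  split; intros Heq.
  - assert (HD : exp D = (1 - u) / (1 + u)) by (rewrite Heq; field; pose proof (exp_pos D); lra).
    now rewrite Hinv, <- HD, <- exp_Ropp, ln_exp.
  - assert (HD : exp D = (1 - u) / (1 + u)).
    { assert (Hq : 0 < (1 - u) / (1 + u)) by (apply Rdiv_lt_0_compat; lra).
      rewrite Hinv, ln_Rinv in Heq by exact Hq.
      replace D with (ln ((1 - u) / (1 + u))) by lra; now apply exp_ln. }
    rewrite HD; field; lra.
Qed.

Lemma neg_Delta2_2 beta u : - Delta2 beta 2 u = beta * u.
Proof. unfold Delta2; simpl; field. Qed.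

Lemma neg_Delta2_3 beta u : - Delta2 beta 3 u = beta * u.
Proof. unfold Delta2; simpl; field. Qed.

Lemma neg_Delta2_4 beta u : - Delta2 beta 4 u = beta * ((3 * u + u ^ 3) / 4).
Proof. unfold Delta2; simpl; field. Qed.

Lemma lt_of_derive_pos f f' a b :
  a < b -> (forall c, a <= c <= b -> derivable_pt_lim f c (f' c)) ->
  (forall c, a < c < b -> 0 < f' c) -> f a < f b.
Proof.
  intros Hab Hd Hpos; destruct (MVT_cor2 f f' a b Hab Hd) as [c [Hc Hcab]].
  pose proof (Hpos c Hcab); nra.
Qed.

Lemma two_artanh_gt u : 0 < u < 1 -> 2 * u + 2 * u ^ 3 / 3 < two_artanh u.
Proof.
  intros Hu.
  set (f := fun x => two_artanh x - (2 * x + 2 * x ^ 3 / 3)).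
  enough (Hlt : f 0 < f u) by (unfold f in Hlt; rewrite two_artanh_0 in Hlt; lra).
  apply (lt_of_derive_pos f (fun x => 2 * x ^ 4 / (1 - x ^ 2))); [lra| |].
  - intros c Hc; apply is_derive_Reals; unfold f, two_artanh; auto_derive.
    + repeat split; lra.
    + field; split; [|split]; nra.
  - intros c Hc; apply Rdiv_lt_0_compat; [|nra].
    pose proof (pow_lt c 4 (proj1 Hc)); lra.
Qed.

Lemma two_artanh_lt u : 0 < u < 1 -> two_artanh u < 2 * (3 * u + u ^ 3) / (3 * (1 - u ^ 4)).
Proof.
  intros Hu.
  set (f := fun x => 2 * (3 * x + x ^ 3) / (3 * (1 - x ^ 4)) - two_artanh x).
  enough (Hlt : f 0 < f u) by (unfold f in Hlt; rewrite two_artanh_0 in Hlt; lra).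
  assert (H4 : forall c, 0 <= c < 1 -> 0 < 1 - c ^ 4)
    by (intros c Hc; pose proof (pow_lt_1_compat c 4 Hc ltac:(lia)); lra).
  apply (lt_of_derive_pos f (fun x => 2 * (12 * x ^ 4 + 4 * x ^ 6) / (3 * (1 - x ^ 4) ^ 2)));
    [lra| |].
  - intros c Hc; pose proof (H4 c ltac:(lra)).
    apply is_derive_Reals; unfold f, two_artanh; auto_derive.
    + repeat split; lra.
    + field; repeat split; lra.
  - intros c Hc; pose proof (H4 c ltac:(lra)).
    pose proof (pow_lt c 4 (proj1 Hc)); pose proof (pow_lt c 6 (proj1 Hc)).
    apply Rdiv_lt_0_compat; [lra|]. pose proof (pow_lt (1 - c ^ 4) 2 ltac:(lra)); lra.
Qed.

Lemma two_artanh_lt_linear u : 0 < u < 1 -> two_artanh u < 2 * u / (1 - u ^ 2).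
Proof.
  intros Hu; eapply Rlt_trans; [now apply two_artanh_lt|].
  assert (0 < 1 - u ^ 2) by nra.
  replace (2 * u / (1 - u ^ 2)) with (2 * (3 * u + 3 * u ^ 3) / (3 * (1 - u ^ 4)))
    by (field; split; nra).
  unfold Rdiv; apply Rmult_lt_compat_r.
  - apply Rinv_0_lt_compat; nra.
  - pose proof (pow_lt u 3 (proj1 Hu)); lra.
Qed.

Lemma pow_le_self a n : 0 <= a <= 1 -> (0 < n)%nat -> a ^ n <= a.
Proof.
  intros Ha Hn; destruct n as [|m]; [lia|]; rewrite <- tech_pow_Rmult.
  pose proof (pow_incr a 1 m Ha); rewrite pow1 in *; pose proof (pow_le a m (proj1 Ha)); nra.
Qed.

(* The third hypothesis is the positivity of the numerator [L' k - L k'] of [(L / k)'],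
   where [L' c = 2 / (1 - c^2)]. *)
Lemma two_artanh_div_increasing k k' :
  (forall c, 0 < c < 1 -> derivable_pt_lim k c (k' c)) ->
  (forall c, 0 < c < 1 -> 0 < k c) ->
  (forall c, 0 < c < 1 -> two_artanh c * k' c < 2 * k c / (1 - c ^ 2)) ->
  forall x y, 0 < x -> x < y -> y < 1 -> two_artanh x / k x < two_artanh y / k y.
Proof.
  intros Hk Hkpos Hbound x y Hx Hxy Hy.
  apply (lt_of_derive_pos (two_artanh / k)%F
           (fun c => (2 / (1 - c ^ 2) * k c - k' c * two_artanh c) / (k c)²) x y Hxy).
  - intros c Hc; pose proof (Hkpos c ltac:(lra)).
    apply derivable_pt_lim_div; [apply derivable_pt_lim_two_artanh; lra | apply Hk; lra | lra].
  - intros c Hc; pose proof (Hkpos c ltac:(lra)); pose proof (Hbound c ltac:(lra)).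
    apply Rdiv_lt_0_compat; [|unfold Rsqr; nra].
    replace (2 / (1 - c ^ 2) * k c) with (2 * k c / (1 - c ^ 2)) by (field; nra); lra.
Qed.

Definition is_mf_threshold (z : nat) (beta1 : R) : Prop :=
  0 < beta1 /\
  forall beta : R, 0 < beta ->
    (beta <= beta1 -> forall u : R, 0 <= u < 1 -> mf_eq2 beta z u -> u = 0) /\
    (beta1 < beta -> exists! u : R, 0 < u < 1 /\ mf_eq2 beta z u).

Section Threshold.

Variables (k : R -> R) (beta1 : R) (n : nat).
Hypothesis beta1_pos : 0 < beta1.
Hypothesis n_pos : (0 < n)%nat.
Hypothesis k_pos : forall u, 0 < u < 1 -> 0 < k u.
Hypothesis k_lt1 : forall u, 0 < u < 1 -> k u < 1.
Hypothesis k_cont : forall u, 0 < u < 1 -> continuity_pt k u.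
Hypothesis ratio_increasing :
  forall x y, 0 < x -> x < y -> y < 1 -> two_artanh x / k x < two_artanh y / k y.
Hypothesis ratio_gt : forall u, 0 < u < 1 -> beta1 < two_artanh u / k u.
Hypothesis ratio_lt : forall u, 0 < u < 1 -> two_artanh u / k u < beta1 / (1 - u ^ n).

Lemma ratio_eqE beta u :
  0 < u < 1 -> two_artanh u = beta * k u <-> two_artanh u / k u = beta.
Proof.
  intros Hu; pose proof (k_pos u Hu); split; intros Heq.
  - rewrite Heq; field; lra.
  - rewrite <- Heq; field; lra.
Qed.

Lemma exists_ratio_lt beta : beta1 < beta -> exists a, 0 < a < 1 /\ two_artanh a / k a < beta.
Proof.
  intros Hb; set (a := 1 - beta1 / beta).
  assert (Hq : 0 < beta1 / beta < 1)
    by (split; [apply Rdiv_lt_0_compat | apply Rlt_div_l]; lra).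
  assert (Ha : 0 < a < 1) by (unfold a; lra).
  exists a; split; [exact Ha|].
  eapply Rlt_le_trans; [now apply ratio_lt|].
  pose proof (pow_le_self a n ltac:(lra) n_pos).
  apply Rle_div_l; [lra|].
  replace beta1 with (beta * (1 - a)) at 1 by (unfold a; field; lra); nra.
Qed.

Lemma ratio_injective u v :
  0 < u < 1 -> 0 < v < 1 -> two_artanh u / k u = two_artanh v / k v -> u = v.
Proof.
  intros Hu Hv Heq; destruct (Rtotal_order u v) as [Hlt|[Heq'|Hgt]]; [|exact Heq'|].
  - pose proof (ratio_increasing u v (proj1 Hu) Hlt (proj2 Hv)); lra.
  - pose proof (ratio_increasing v u (proj1 Hv) Hgt (proj2 Hu)); lra.
Qed.

Lemma no_solution_below beta u :
  beta <= beta1 -> 0 < u < 1 -> two_artanh u <> beta * k u.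
Proof.
  intros Hb Hu Heq; apply ratio_eqE in Heq; [|exact Hu].
  pose proof (ratio_gt u Hu); lra.
Qed.

(* The endpoint [t = tanh (beta / 2)] has [L t = beta > beta * k t], so a root lies to its left. *)
Lemma unique_solution_above beta :
  0 < beta -> beta1 < beta -> exists! u, 0 < u < 1 /\ two_artanh u = beta * k u.
Proof.
  intros Hb0 Hb.
  destruct (two_artanh_tanh beta Hb0) as [Ht HLt].
  set (t := (exp beta - 1) / (exp beta + 1)) in *.
  destruct (exists_ratio_lt beta Hb) as [a [Ha Hra]].
  pose proof (k_pos a Ha); pose proof (k_pos t Ht); pose proof (k_lt1 t Ht).
  assert (HLa : two_artanh a < beta * k a) by (apply Rlt_div_l; lra).
  assert (Hrt : beta < two_artanh t / k t)
    by (rewrite HLt; apply Rlt_div_r; [lra | nra]).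
  assert (Hat : a < t).
  { destruct (Rtotal_order a t) as [Hlt|[Heq|Hgt]]; [exact Hlt|subst a; lra|].
    pose proof (ratio_increasing t a (proj1 Ht) Hgt (proj2 Ha)); lra. }
  destruct (IVT_interv (fun x => two_artanh x - beta * k x) a t) as [u [Hu Hroot]];
    [| exact Hat | lra | rewrite HLt; nra |].
  - intros c Hc; apply continuity_pt_minus; [apply continuity_pt_two_artanh; lra|].
    apply continuity_pt_scal; apply k_cont; lra.
  - assert (Hu01 : 0 < u < 1) by lra.
    exists u; split; [split; [exact Hu01 | lra]|].
    intros v [Hv Heqv]; apply ratio_injective; [exact Hu01 | exact Hv|].
    transitivity beta; [apply ratio_eqE; [exact Hu01 | lra] | symmetry; now apply ratio_eqE].
Qed.

Lemma is_mf_threshold_of_kernel z :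
  (forall beta u, - Delta2 beta z u = beta * k u) -> is_mf_threshold z beta1.
Proof.
  intros Hk; split; [exact beta1_pos|]; intros beta Hb; split.
  - intros Hle u Hu Heq; apply mf_eq2_iff in Heq; [|lra]; rewrite Hk in Heq.
    destruct (Req_dec u 0) as [Hu0|Hu0]; [exact Hu0|].
    exfalso; exact (no_solution_below beta u Hle ltac:(lra) Heq).
  - intros Hlt; destruct (unique_solution_above beta Hb Hlt) as [u [[Hu Heq] Huniq]].
    exists u; split.
    + split; [exact Hu|]; apply mf_eq2_iff; [lra|]; now rewrite Hk.
    + intros v [Hv Heqv]; apply Huniq; split; [exact Hv|].
      apply mf_eq2_iff in Heqv; [|lra]; now rewrite Hk in Heqv.
Qed.

End Threshold.

Lemma is_mf_threshold_linear z :
  (forall beta u, - Delta2 beta z u = beta * u) -> is_mf_threshold z 2.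
Proof.
  apply (is_mf_threshold_of_kernel (fun u => u) 2 2); [lra | lia | intros; lra | intros; lra | | | |].
  - intros u _; apply continuity_pt_id.
  - apply (two_artanh_div_increasing _ (fun _ => 1)).
    + intros c _; apply derivable_pt_lim_id.
    + intros; lra.
    + intros c Hc; rewrite Rmult_1_r; now apply two_artanh_lt_linear.
  - intros u Hu; apply Rlt_div_r; [lra|].
    pose proof (two_artanh_gt u Hu); pose proof (pow_lt u 3 (proj1 Hu)); lra.
  - intros u Hu; apply Rlt_div_l; [lra|].
    replace (2 / (1 - u ^ 2) * u) with (2 * u / (1 - u ^ 2)) by (field; nra).
    now apply two_artanh_lt_linear.
Qed.

Lemma is_mf_threshold_cubic :
  (forall beta u, - Delta2 beta 4 u = beta * ((3 * u + u ^ 3) / 4)) -> is_mf_threshold 4 (8 / 3).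
Proof.
  assert (Hcube : forall u, 0 < u < 1 -> 0 < u ^ 3 < 1)
    by (intros u Hu; split; [apply pow_lt; lra | apply pow_lt_1_compat; [lra | lia]]).
  apply (is_mf_threshold_of_kernel (fun u => (3 * u + u ^ 3) / 4) (8 / 3) 4); [lra | lia | | | | | |].
  - intros u Hu; pose proof (Hcube u Hu); lra.
  - intros u Hu; pose proof (Hcube u Hu); lra.
  - intros u _; apply derivable_continuous_pt; exists ((3 + 3 * u ^ 2) / 4).
    apply is_derive_Reals; auto_derive; [auto | field].
  - apply (two_artanh_div_increasing _ (fun c => (3 + 3 * c ^ 2) / 4)).
    + intros c _; apply is_derive_Reals; auto_derive; [auto | field].
    + intros c Hc; pose proof (Hcube c Hc); lra.
    + intros c Hc; assert (0 < 1 - c ^ 2) by nra.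
      replace (2 * ((3 * c + c ^ 3) / 4) / (1 - c ^ 2))
        with (2 * (3 * c + c ^ 3) / (3 * (1 - c ^ 4)) * ((3 + 3 * c ^ 2) / 4))
        by (field; split; nra).
      apply Rmult_lt_compat_r; [nra | now apply two_artanh_lt].
  - intros u Hu; apply (Rlt_div_r (8 / 3)); cbv beta; [pose proof (Hcube u Hu); lra|].
    pose proof (two_artanh_gt u Hu); lra.
  - intros u Hu; pose proof (Hcube u Hu).
    assert (0 < 1 - u ^ 4) by (pose proof (pow_lt_1_compat u 4 ltac:(lra) ltac:(lia)); lra).
    apply Rlt_div_l; cbv beta; [lra|].
    replace (8 / 3 / (1 - u ^ 4) * ((3 * u + u ^ 3) / 4))
      with (2 * (3 * u + u ^ 3) / (3 * (1 - u ^ 4))) by (field; lra).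
    now apply two_artanh_lt.
Qed.

Theorem lemma5p6 (z : nat) (hz2 : (2 <= z)%nat) (hz4 : (z <= 4)%nat) :
  exists beta1 : R, 0 < beta1 /\
    forall beta : R, 0 < beta ->
      (beta <= beta1 -> forall u : R, 0 <= u < 1 -> mf_eq2 beta z u -> u = 0) /\
      (beta1 < beta -> exists! u : R, 0 < u < 1 /\ mf_eq2 beta z u).
Proof.
  assert (z = 2%nat \/ z = 3%nat \/ z = 4%nat) as [-> | [-> | ->]] by lia.
  - exists 2; apply is_mf_threshold_linear, neg_Delta2_2.
  - exists 2; apply is_mf_threshold_linear, neg_Delta2_3.
  - exists (8 / 3); apply is_mf_threshold_cubic, neg_Delta2_4.
Qed.
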